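(* Let $n\ge1$, let $H_n:\mathbb{Z}^n\to\mathbb{R}$ be a finitely supported kernel and $x,y:\mathbb{Z}\to\mathbb{R}$ finitely supported signals. Then $$\big\|H_n*(x+y)^n-H_n*x^n\big\|_2\le\min\left(\|H_n\|_2\sum_{k=0}^{n-1}\Big(\frac{en}{k}\Big)^k\|x\|_1^k\|y\|_1^{n-k},\ \|H_n\|_1\sum_{k=0}^{n-1}\Big(\frac{en}{k}\Big)^k\|x\|_{2k}^k\|y\|_{2(n-k)}^{n-k}\right),$$ where $e$ is the base of the natural logarithm.
   Context: For a kernel $H:\mathbb{Z}^n\to\mathbb{R}$ and signals $x_1,\dots,x_n:\mathbb{Z}\to\mathbb{R}$, the order-$n$ convolution is $(H*[x_1,\dots,x_n])(t)=\sum_{(\tau_1,\dots,\tau_n)\in\mathbb{Z}^n}H(\tau_1,\dots,\tau_n)\prod_{i=1}^n x_i(t-\tau_i)$, and $H*x^n$ denotes $H*[x,\dots,x]$ ($n$ copies). For a function $A$ on $\mathbb{Z}^d$, $\|A\|_p=(\sum_\tau|A(\tau)|^p)^{1/p}$. In the $k=0$ terms, $(en/k)^k$ and $\|x\|_{2k}^k$ are interpreted as $1$. *)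

From HB Require Import structures.
From mathcomp Require Import all_boot all_order all_algebra.
From mathcomp Require Import all_classical all_reals.
From mathcomp Require Import all_analysis.
Set Implicit Arguments. Unset Strict Implicit. Unset Printing Implicit Defensive.
Import Order.TTheory GRing.Theory Num.Theory.
Local Open Scope classical_set_scope.
Local Open Scope ring_scope.

Notation Zn n := {ffun 'I_n -> int}.

Definition fin_supp (T : Type) (R : realType) (f : T -> R) : Prop :=
  finite_set [set t | f t != 0].

Definition lpnorm (R : realType) (T : choiceType) (p : nat) (A : T -> R) : R :=
  powR (\sum_(t \in [set: T]) `|A t| ^+ p) (p%:R^-1).

Definition convn (R : realType) (n : nat) (H : Zn n -> R)
    (xs : 'I_n -> int -> R) (t : int) : R :=
  \sum_(tau \in [set: Zn n]) H tau * \prod_(i < n) xs i (t - tau i).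

Definition convpow (R : realType) (n : nat) (H : Zn n -> R) (x : int -> R)
    : int -> R := convn H (fun _ => x).

From HB Require Import structures.
From mathcomp Require Import all_boot all_order all_algebra.
From mathcomp Require Import all_classical all_reals.
From mathcomp Require Import all_analysis.
From mathcomp Require Import finmap ring lra.
Set Implicit Arguments. Unset Strict Implicit. Unset Printing Implicit Defensive.
Import Order.TTheory GRing.Theory Num.Theory.
Local Open Scope ring_scope.

(* Expanding (x + y)^n multilinearly, H*(x+y)^n - H*x^n is the sum, over the
   proper subsets A of the n coordinates, of the convolutions H*[z_A] with
   z_A,i = x for i in A and z_A,i = y otherwise; there are C(n, k) <= (en/k)^k
   subsets of size k.  By Minkowski's inequality it suffices to bound each
   H*[z_A] in l^2.  The first bound is Young's inequality
   |H*[z]|_2 <= |H|_2 prod_i |z_i|_1, obtained from the Schur test for the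
   kernel prod_i |z_i(t - tau_i)|, whose sums over tau and (as n >= 1) over t
   are at most prod_i |z_i|_1.  The second applies Minkowski over tau: each
   shifted product prod_i z_A,i(t - tau_i) has l^2 norm at most
   |x|_{2k}^k |y|_{2(n-k)}^(n-k), bounding the k factors x pointwise by
   |x|_{2k} and the n - k factors y by the AM-GM inequality.
   l^2 norms are controlled through their finite partial sums
   ([l2_bounded_by]), so the convolutions never need to be shown finitely
   supported. *)

Section FiniteSums.
Variable R : realFieldType.

Lemma ler_sum_subseq_uniq (T : eqType) (s r : seq T) (F : T -> R) :
  uniq s -> uniq r -> {subset s <= r} -> (forall i, i \in r -> 0 <= F i) ->
  \sum_(i <- s) F i <= \sum_(i <- r) F i.
Proof.
move=> us ur sr F0.
have -> : \sum_(i <- s) F i = \sum_(i <- r | i \in s) F i.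
  rewrite -[RHS]big_filter; apply/perm_big/uniq_perm; rewrite ?filter_uniq //.
  by move=> i; rewrite mem_filter andb_idr //; exact: sr.
rewrite [leRHS](bigID (mem s)) /= lerDl big_seq_cond sumr_ge0 // => i /andP[ir _].
exact: F0.
Qed.

Lemma cauchy_schwarz_weighted (I : Type) (r : seq I) (w a b : I -> R) :
  (forall i, 0 <= w i) ->
  (\sum_(i <- r) w i * a i * b i) ^+ 2 <=
  (\sum_(i <- r) w i * a i ^+ 2) * (\sum_(i <- r) w i * b i ^+ 2).
Proof.
move=> w0.
set SA := \sum_(i <- r) w i * a i ^+ 2; set SB := \sum_(i <- r) w i * b i ^+ 2.
set SC := \sum_(i <- r) w i * a i * b i.
have lagrange : \sum_(i <- r) \sum_(j <- r) w i * w j * (a i * b j - a j * b i) ^+ 2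
    = (SA * SB - SC ^+ 2) *+ 2.
  have expand i j : w i * w j * (a i * b j - a j * b i) ^+ 2 =
      (w i * a i ^+ 2) * (w j * b j ^+ 2) + (w j * a j ^+ 2) * (w i * b i ^+ 2)
      - ((w i * a i * b i) * (w j * a j * b j)) *+ 2 by ring.
  under eq_bigr do under eq_bigr do rewrite expand.
  under eq_bigr do rewrite sumrB big_split /=.
  rewrite sumrB big_split /= [X in _ + X - _]exchange_big /=.
  have -> : \sum_(i <- r) \sum_(j <- r) (w i * a i ^+ 2) * (w j * b j ^+ 2) = SA * SB.
    by rewrite mulr_suml; apply: eq_bigr => i _; rewrite mulr_sumr.
  have -> : \sum_(i <- r) \sum_(j <- r) ((w i * a i * b i) * (w j * a j * b j)) *+ 2
      = SC ^+ 2 *+ 2.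
    rewrite expr2 mulr_suml -sumrMnl; apply: eq_bigr => i _.
    by rewrite sumrMnl mulr_sumr.
  by rewrite !mulr2n; ring.
have : 0 <= (SA * SB - SC ^+ 2) *+ 2.
  rewrite -lagrange; apply: sumr_ge0 => i _; apply: sumr_ge0 => j _.
  by rewrite mulr_ge0 ?sqr_ge0 ?mulr_ge0.
by rewrite pmulrn_lge0 // subr_ge0.
Qed.

Lemma cauchy_schwarz (I : Type) (r : seq I) (a b : I -> R) :
  (\sum_(i <- r) a i * b i) ^+ 2 <=
  (\sum_(i <- r) a i ^+ 2) * (\sum_(i <- r) b i ^+ 2).
Proof.
under eq_bigr do rewrite -[a _]mul1r.
under [X in _ <= X * _]eq_bigr do rewrite -[a _ ^+ 2]mul1r.
under [X in _ <= _ * X]eq_bigr do rewrite -[b _ ^+ 2]mul1r.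
exact: cauchy_schwarz_weighted.
Qed.

Definition l2_bounded_by (I : eqType) (f : I -> R) (c : R) :=
  forall s : seq I, uniq s -> \sum_(t <- s) f t ^+ 2 <= c ^+ 2.

Lemma l2_bounded_byD (I : eqType) (f g : I -> R) (a b : R) :
  0 <= a -> 0 <= b -> l2_bounded_by f a -> l2_bounded_by g b ->
  l2_bounded_by (f \+ g) (a + b).
Proof.
move=> a0 b0 fa gb s us; have := fa s us; have := gb s us.
set F := \sum_(t <- s) f t ^+ 2; set G := \sum_(t <- s) g t ^+ 2 => Gb Fa.
set C := \sum_(t <- s) f t * g t.
have F0 : 0 <= F by rewrite sumr_ge0 // => t _; exact: sqr_ge0.
have G0 : 0 <= G by rewrite sumr_ge0 // => t _; exact: sqr_ge0.
have Cab : C <= a * b.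
  have : C ^+ 2 <= F * G by exact: cauchy_schwarz.
  have : F * G <= (a * b) ^+ 2 by rewrite exprMn; exact: ler_pM.
  have : 0 <= a * b by exact: mulr_ge0.
  nra.
have -> : \sum_(t <- s) (f \+ g) t ^+ 2 = F + G + C *+ 2.
  by rewrite -sumrMnl -!big_split /=; apply: eq_bigr => t _; ring.
rewrite mulr2n; nra.
Qed.

Lemma l2_bounded_by_le (I : eqType) (f : I -> R) (c c' : R) :
  0 <= c -> c <= c' -> l2_bounded_by f c -> l2_bounded_by f c'.
Proof.
move=> c0 cc' fc s us; apply: le_trans (fc s us) _.
by rewrite lerXn2r ?nnegrE // (le_trans c0).
Qed.

Lemma l2_bounded_by_sum (I : eqType) (J : Type) (r : seq J) (P : pred J)
    (G : J -> I -> R) (b : J -> R) :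
  (forall j, P j -> 0 <= b j) -> (forall j, P j -> l2_bounded_by (G j) (b j)) ->
  l2_bounded_by (fun t => \sum_(j <- r | P j) G j t) (\sum_(j <- r | P j) b j).
Proof.
move=> b0 Gb; elim: r => [|j r IH] s us.
  by rewrite big_nil expr0n big1 // => t _; rewrite big_nil expr0n.
under eq_bigr do rewrite big_cons; rewrite big_cons.
case: ifP => Pj /=; last exact: IH.
have b0r : 0 <= \sum_(i <- r | P i) b i by rewrite sumr_ge0.
exact: (l2_bounded_byD (b0 j Pj) b0r (Gb j Pj) IH).
Qed.

Lemma prod_le_mean_expn (I : finType) (A : {pred I}) (c : I -> R) :
  (forall i, 0 <= c i) -> (0 < #|A|)%N ->
  \prod_(i in A) c i <= (\sum_(i in A) c i ^+ #|A|) / #|A|%:R.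
Proof.
move=> c0 A0.
rewrite -(ler_pXn2r A0) ?nnegrE ?prodr_ge0 // -?prodrXl.
  exact: Order.le_of_leif (leif_AGM (fun i _ => exprn_ge0 _ (c0 i))).
by rewrite divr_ge0 // sumr_ge0 // => i _; rewrite exprn_ge0.
Qed.

Lemma schur_test (I J : Type) (s : seq I) (r : seq J) (K : I -> J -> R)
    (h : J -> R) (M : R) :
  (forall t u, 0 <= K t u) -> 0 <= M ->
  (forall t, \sum_(u <- r) K t u <= M) -> (forall u, \sum_(t <- s) K t u <= M) ->
  \sum_(t <- s) (\sum_(u <- r) K t u * h u) ^+ 2 <= M ^+ 2 * \sum_(u <- r) h u ^+ 2.
Proof.
move=> K0 M0 rowK colK.
have row_cs t : (\sum_(u <- r) K t u * h u) ^+ 2 <= M * \sum_(u <- r) K t u * h u ^+ 2.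
  have := @cauchy_schwarz_weighted _ r (K t) h (fun=> 1) (K0 t).
  rewrite expr1n (eq_bigr (fun u => K t u * h u) (fun u _ => mulr1 _)).
  rewrite (eq_bigr (K t) (fun u _ => mulr1 _)) => /le_trans; apply.
  by rewrite mulrC ler_wpM2r ?rowK // sumr_ge0 // => u _; rewrite mulr_ge0 ?sqr_ge0.
apply: le_trans (ler_sum _ (fun t _ => row_cs t)) _.
rewrite -mulr_sumr exchange_big /= expr2 -mulrA.
rewrite ler_wpM2l // mulr_sumr; apply: ler_sum => u _.
by rewrite -mulr_suml ler_wpM2r ?sqr_ge0 ?colK.
Qed.

End FiniteSums.

Section LpNorm.
Variables (R : realType) (T : choiceType).
Implicit Types (A F : T -> R) (p : nat).

Lemma lpnorm_ge0 p A : 0 <= lpnorm p A.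
Proof. exact: powR_ge0. Qed.

Lemma lpnormX p A : (0 < p)%N ->
  lpnorm p A ^+ p = \sum_(t \in [set: T]) `|A t| ^+ p.
Proof.
move=> p0; rewrite /lpnorm -powR_mulrn ?powR_ge0 // -powRrM mulVf ?powRr1 //.
  by apply: fsumr_ge0 => t _; rewrite exprn_ge0.
by rewrite pnatr_eq0 -lt0n.
Qed.

Lemma sum_le_fsumT F (s : seq T) :
  (forall t, 0 <= F t) -> finite_set [set t | F t != 0] -> uniq s ->
  \sum_(t <- s) F t <= \sum_(t \in [set: T]) F t.
Proof.
move=> F0 finF us; case: finite_supportP => [infF|X _ FX _].
  by exfalso; apply: infF; apply: sub_finite_set finF => t [_ /eqP].
rewrite (bigID (mem X)) /= [X in _ + X]big1 ?addr0; last first.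
  by move=> t /negbTE tX; apply: FX; rewrite ?tX.
rewrite -big_filter; apply: ler_sum_subseq_uniq; rewrite ?filter_uniq //.
by move=> t; rewrite mem_filter => /andP[].
Qed.

Lemma sum_le_lpnormX p A (U : eqType) (h : U -> T) (s : seq U) :
  (0 < p)%N -> fin_supp A -> injective h -> uniq s ->
  \sum_(u <- s) `|A (h u)| ^+ p <= lpnorm p A ^+ p.
Proof.
move=> p0 finA h_inj us; rewrite lpnormX // -(big_map h predT (fun t => `|A t| ^+ p)).
apply: sum_le_fsumT; rewrite ?map_inj_uniq //.
apply: sub_finite_set finA => t /=; apply: contra => /eqP ->.
by rewrite normr0 expr0n; case: p p0.
Qed.

Lemma sum_le_lpnorm1 A (U : eqType) (h : U -> T) (s : seq U) :
  fin_supp A -> injective h -> uniq s -> \sum_(u <- s) `|A (h u)| <= lpnorm 1 A.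
Proof. exact: (sum_le_lpnormX (p := 1) (A := A) (h := h) (s := s) isT). Qed.

Lemma normr_le_lpnorm p A t : (0 < p)%N -> fin_supp A -> `|A t| <= lpnorm p A.
Proof.
move=> p0 finA; rewrite -(ler_pXn2r p0) ?nnegrE ?lpnorm_ge0 //.
by have := sum_le_lpnormX (s := [:: t]) p0 finA (@inj_id T) isT; rewrite big_seq1.
Qed.

Lemma lpnorm2_le A c : 0 <= c -> l2_bounded_by A c -> lpnorm 2 A <= c.
Proof.
move=> c0 Ac; rewrite -(ler_pXn2r (ltn0Sn 1)) ?nnegrE ?lpnorm_ge0 // lpnormX //.
rewrite (eq_fsbigr (fun t => A t ^+ 2)) => [|t _]; last by rewrite real_normK ?num_real.
exact: Ac.
Qed.

End LpNorm.

Lemma ffact_leq_expn n k : (n ^_ k <= n ^ k)%N.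
Proof.
by elim: k => // k IH; rewrite ffactnSr expnSr leq_mul ?leq_subr.
Qed.

Lemma bin_le_expR (R : realType) n k :
  ('C(n, k)%:R : R) <= (expR 1 * n%:R / k%:R) ^+ k.
Proof.
case: k => [|k]; first by rewrite bin0 expr0.
set K := k.+1.
have fact_gt0 : (0 : R) < K`!%:R by rewrite ltr0n fact_gt0.
have binF : ('C(n, K)%:R : R) * K`!%:R <= n%:R ^+ K.
  by rewrite -natrM bin_ffact -natrX ler_nat ffact_leq_expn.
(* K^K / K! is a term of the series of expR K = expR 1 ^+ K *)
have powK : K%:R ^+ K / K`!%:R <= expR 1 ^+ K :> R.
  have := @expR_ge1Dxn R K%:R k (ler0n _ _).
  by rewrite -expRM_natl mulr1; apply: le_trans; rewrite lerDr.
rewrite !exprMn exprVn ler_pdivlMr ?exprn_gt0 ?ltr0n //.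
have -> : ('C(n, K)%:R : R) * K%:R ^+ K
    = ('C(n, K)%:R * K`!%:R) * (K%:R ^+ K / K`!%:R).
  by field; rewrite gt_eqF.
by rewrite mulrC ler_pM // mulr_ge0 ?ler0n.
Qed.

Lemma sum_proper_subsets_card (V : nmodType) n (g : nat -> V) :
  \sum_(A : {set 'I_n} | A != [set: 'I_n]%SET) g #|A| = \sum_(0 <= k < n) g k *+ 'C(n, k).
Proof.
rewrite (partition_big (fun A : {set 'I_n} => (inord #|A| : 'I_n.+1))
   (fun j : 'I_n.+1 => (j < n)%N)); last first.
  move=> A; rewrite -properT => /proper_card; rewrite cardsT card_ord => An.
  by rewrite inordK // ltnS ltnW.
rewrite big_mkcond big_ord_recr /= ltnn addr0 big_mkord.
apply: eq_bigr => j _; rewrite ltn_ord /=.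
rewrite (eq_bigl (fun A => A \in [set A : {set 'I_n} | #|A| == j])); last first.
  move=> A /=; rewrite inE.
  have -> : (inord #|A| == widen_ord (leqnSn n) j :> 'I_n.+1) = (#|A| == j).
    by rewrite -val_eqE /= inordK // ltnS -[X in (_ <= X)%N](card_ord n) max_card.
  rewrite andb_idl // => /eqP Aj.
  by rewrite -properT properEcard finset.subsetT cardsT card_ord Aj ltn_ord.
rewrite (eq_bigr (fun _ => g j)) => [|A]; last by rewrite inE => /eqP ->.
by rewrite sumr_const card_draws card_ord.
Qed.

Section Convolution.
Variable R : realType.

Lemma sum_prod_ffun_le n (r : seq (Zn n)) (a : 'I_n -> int -> R) (M : 'I_n -> R) :
  uniq r -> (forall i u, 0 <= a i u) ->
  (forall i (s : seq int), uniq s -> \sum_(u <- s) a i u <= M i) ->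
  \sum_(tau <- r) \prod_(i < n) a i (tau i) <= \prod_(i < n) M i.
Proof.
move=> ur a0 aM.
(* Index the values of the tau in r by 'I_N, plus a padding index where b
   vanishes; the sum over r is then part of the expansion of prod_i sum_j b. *)
set S := undup [seq fun_of_fin tau i | tau <- r, i <- enum 'I_n]; set N := size S.
pose b i (j : 'I_N.+1) := if (j < N)%N then a i (nth 0 S j) else 0.
have b0 i j : 0 <= b i j by rewrite /b; case: ifP.
have sum_b i : \sum_(j < N.+1) b i j = \sum_(u <- S) a i u.
  rewrite big_ord_recr /= /b ltnn addr0 (big_nth 0) big_mkord.
  by apply: eq_bigr => j _; rewrite /= ltn_ord.
apply: le_trans (_ : _ <= \prod_(i < n) \sum_(j < N.+1) b i j) _; last first.
  by apply: ler_prod => i _; rewrite sumr_ge0 //= sum_b aM ?undup_uniq.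
have inS tau i : tau \in r -> tau i \in S.
  move=> rtau; rewrite mem_undup.
  by rewrite (allpairs_f (fun tau i => fun_of_fin tau i)) ?mem_enum.
have idxS tau i : tau \in r -> (index (tau i) S < N)%N.
  by move/(inS _ i); rewrite index_mem.
pose phi (tau : Zn n) : {ffun 'I_n -> 'I_N.+1} := [ffun i => inord (index (tau i) S)].
have phiE tau i : tau \in r -> b i (phi tau i) = a i (tau i).
  move=> rtau; rewrite /b ffunE (inordK (ltnW (idxS _ i rtau))) idxS //.
  by rewrite nth_index ?inS.
rewrite bigA_distr_bigA /=.
rewrite (eq_big_seq (fun tau => \prod_(i < n) b i (phi tau i))); last first.
  by move=> tau rtau; apply: eq_bigr => i _; rewrite phiE.
rewrite -(big_map phi predT (fun f => \prod_(i < n) b i (f i))).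
apply: ler_sum_subseq_uniq.
- rewrite map_inj_in_uniq // => t1 t2 rt1 rt2 /ffunP e; apply/ffunP => i.
  have := congr1 val (e i); rewrite !ffunE /=.
  rewrite (inordK (ltnW (idxS _ i rt1))) (inordK (ltnW (idxS _ i rt2))).
  by apply: (index_inj 0); rewrite ?inS.
- exact: index_enum_uniq.
- by move=> f _; exact: mem_index_enum.
- by move=> f _; exact: prodr_ge0.
Qed.

Lemma convn_fin_suppE n (H : Zn n -> R) : fin_supp H ->
  exists2 S : seq (Zn n), uniq S & forall zs, convn H zs =
    fun t => \sum_(tau <- S) H tau * \prod_(i < n) zs i (t - tau i).
Proof.
move=> finH; pose S := fset_set [set tau | H tau != 0]%classic.
exists S => [|zs]; first exact: fset_uniq.
apply/funext => t; rewrite /convn (fsbigTE S) // => tau.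
by rewrite (in_fset_set finH) mem_setE /= negbK => /eqP ->; rewrite mul0r.
Qed.

Lemma row_sum_prod_shift_le n (zs : 'I_n -> int -> R) (r : seq (Zn n)) t :
  (forall i, fin_supp (zs i)) -> uniq r ->
  \sum_(tau <- r) \prod_(i < n) `|zs i (t - tau i)| <= \prod_(i < n) lpnorm 1 (zs i).
Proof.
move=> finz ur; apply: (sum_prod_ffun_le (a := fun i u => `|zs i (t - u)|)) => // i s us.
by apply: sum_le_lpnorm1 (finz i) _ us => u v /addrI /oppr_inj.
Qed.

Lemma col_sum_prod_shift_le n (zs : 'I_n -> int -> R) (tau : Zn n) (s : seq int) :
  (0 < n)%N -> (forall i, fin_supp (zs i)) -> uniq s ->
  \sum_(t <- s) \prod_(i < n) `|zs i (t - tau i)| <= \prod_(i < n) lpnorm 1 (zs i).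
Proof.
move=> n0 finz us; pose i0 := Ordinal n0; rewrite [leRHS](bigD1 i0) //=.
set P := \prod_(i < n | i != i0) _.
apply: le_trans (_ : _ <= \sum_(t <- s) `|zs i0 (t - tau i0)| * P) _.
  apply: ler_sum => t _; rewrite (bigD1 i0) //= ler_wpM2l // ler_prod // => i _.
  by rewrite normr_ge0 normr_le_lpnorm.
rewrite -mulr_suml; apply: ler_wpM2r.
  by rewrite prodr_ge0 // => i _; exact: lpnorm_ge0.
exact: sum_le_lpnorm1 (finz i0) (@addIr _ _) us.
Qed.

Lemma convn_l2_young n (H : Zn n -> R) (zs : 'I_n -> int -> R) :
  (0 < n)%N -> fin_supp H -> (forall i, fin_supp (zs i)) ->
  l2_bounded_by (convn H zs) (lpnorm 2 H * \prod_(i < n) lpnorm 1 (zs i)).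
Proof.
move=> n0 finH finz s us; have [S uS ->] := convn_fin_suppE finH.
set M := \prod_(i < n) _.
pose K t (tau : Zn n) := \prod_(i < n) `|zs i (t - tau i)|.
apply: le_trans (_ : _ <= \sum_(t <- s) (\sum_(tau <- S) K t tau * `|H tau|) ^+ 2) _.
  apply: ler_sum => t _.
  have normS : `|\sum_(tau <- S) H tau * \prod_(i < n) zs i (t - tau i)| <=
      \sum_(tau <- S) K t tau * `|H tau|.
    apply: le_trans (ler_norm_sum _ _ _) _; apply: ler_sum => tau _.
    by rewrite normrM normr_prod mulrC.
  rewrite -real_normK ?num_real // ler_sqr ?nnegrE ?normS //.
  exact: le_trans normS.
have K0 t tau : 0 <= K t tau by exact: prodr_ge0.
have M0 : 0 <= M by rewrite prodr_ge0 // => i _; exact: lpnorm_ge0.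
have rowK t : \sum_(tau <- S) K t tau <= M := row_sum_prod_shift_le t finz uS.
have colK tau : \sum_(t <- s) K t tau <= M := col_sum_prod_shift_le tau n0 finz us.
apply: le_trans (schur_test (fun tau => `|H tau|) K0 M0 rowK colK) _.
rewrite exprMn [leRHS]mulrC; apply: ler_wpM2l; first exact: sqr_ge0.
exact: (sum_le_lpnormX (h := id) (ltn0Sn 1) finH (@inj_id _) uS).
Qed.

Definition mix n (x y : int -> R) (A : {set 'I_n}) (i : 'I_n) : int -> R :=
  fun u => if i \in A then x u else y u.

Lemma card_setC_ord n (A : {set 'I_n}) : #|~: A| = (n - #|A|)%N.
Proof. by rewrite cardsCs finset.setCK card_ord. Qed.

Lemma prod_mix n (f : (int -> R) -> R) (x y : int -> R) (A : {set 'I_n}) :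
  \prod_(i < n) f (mix x y A i) = f x ^+ #|A| * f y ^+ (n - #|A|).
Proof.
rewrite -card_setC_ord -!prodr_const (bigID (mem A)) /=; congr (_ * _).
  by apply: eq_bigr => i Ai; rewrite /mix Ai.
by apply: eq_big => [i|i /negPf Ai]; rewrite ?inE // /mix Ai.
Qed.

Lemma prod_shift_sqr_le n (x : int -> R) (A : {set 'I_n}) (tau : Zn n) t :
  fin_supp x -> \prod_(i in A) x (t - tau i) ^+ 2 <= (lpnorm (2 * #|A|) x ^+ #|A|) ^+ 2.
Proof.
move=> finx; rewrite exprAC -prodr_const; apply: ler_prod => i Ai.
rewrite sqr_ge0 -real_normK ?num_real // lerXn2r ?nnegrE ?lpnorm_ge0 //.
by apply: normr_le_lpnorm; rewrite // muln_gt0 /=; apply/card_gt0P; exists i.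
Qed.

Lemma sum_prod_shift_sqr_le n (y : int -> R) (B : {set 'I_n}) (tau : Zn n)
    (s : seq int) :
  (0 < #|B|)%N -> fin_supp y -> uniq s ->
  \sum_(t <- s) \prod_(i in B) y (t - tau i) ^+ 2 <= (lpnorm (2 * #|B|) y ^+ #|B|) ^+ 2.
Proof.
move=> B0 finy us; set m := #|B|; set L := lpnorm _ y ^+ m.
apply: le_trans (_ : _ <=
    \sum_(t <- s) (\sum_(i in B) (y (t - tau i) ^+ 2) ^+ m) / m%:R) _.
  by apply: ler_sum => t _; apply: prod_le_mean_expn => // i; exact: sqr_ge0.
rewrite -mulr_suml exchange_big /= ler_pdivrMr ?ltr0n // mulr_natr -sumr_const.
apply: ler_sum => i _; rewrite /L -exprM [(m * 2)%N]mulnC.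
under eq_bigr do rewrite -real_normK ?num_real // -exprM.
apply: (sum_le_lpnormX (h := fun t => t - tau i)) => //; last exact: addIr.
by rewrite muln_gt0.
Qed.

Lemma shift_prod_mix_l2 n (x y : int -> R) (A : {set 'I_n}) (tau : Zn n) :
  fin_supp x -> fin_supp y -> A != [set: 'I_n]%SET ->
  l2_bounded_by (fun t => \prod_(i < n) mix x y A i (t - tau i))
    (lpnorm (2 * #|A|) x ^+ #|A| * lpnorm (2 * (n - #|A|)) y ^+ (n - #|A|)).
Proof.
move=> finx finy AT s us.
have splitA t : (\prod_(i < n) mix x y A i (t - tau i)) ^+ 2 =
    \prod_(i in A) x (t - tau i) ^+ 2 * \prod_(i in ~: A) y (t - tau i) ^+ 2.
  rewrite -prodrXl (bigID (mem A)) /=; congr (_ * _).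
    by apply: eq_bigr => i Ai; rewrite /mix Ai.
  by apply: eq_big => [i|i /negPf Ai]; rewrite ?inE // /mix Ai.
under eq_bigr do rewrite splitA.
rewrite exprMn -card_setC_ord.
apply: le_trans (_ : _ <= \sum_(t <- s) (lpnorm (2 * #|A|) x ^+ #|A|) ^+ 2 *
    \prod_(i in ~: A) y (t - tau i) ^+ 2) _.
  apply: ler_sum => t _; rewrite ler_wpM2r ?prod_shift_sqr_le //.
  by rewrite prodr_ge0 // => i _; exact: sqr_ge0.
rewrite -mulr_sumr ler_wpM2l ?sqr_ge0 // sum_prod_shift_sqr_le //.
move: AT; rewrite card_setC_ord subn_gt0 -properT => /proper_card.
by rewrite cardsT card_ord.
Qed.

Lemma convn_mix_l2 n (H : Zn n -> R) (x y : int -> R) (A : {set 'I_n}) :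
  fin_supp H -> fin_supp x -> fin_supp y -> A != [set: 'I_n]%SET ->
  l2_bounded_by (convn H (mix x y A)) (lpnorm 1 H *
    (lpnorm (2 * #|A|) x ^+ #|A| * lpnorm (2 * (n - #|A|)) y ^+ (n - #|A|))).
Proof.
move=> finH finx finy AT; have [S uS ->] := convn_fin_suppE finH.
set B := _ * _ ^+ (n - #|A|).
have B0 : 0 <= B by rewrite mulr_ge0 ?exprn_ge0 ?lpnorm_ge0.
apply: (l2_bounded_by_le _ _ (l2_bounded_by_sum (P := xpredT) S
  (b := fun tau => `|H tau| * B) _ _)).
- by rewrite sumr_ge0 // => tau _; rewrite mulr_ge0.
- rewrite -mulr_suml ler_wpM2r //.
  exact: (sum_le_lpnorm1 (h := id)).
- by move=> tau _; rewrite mulr_ge0.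
move=> tau _ s us; under eq_bigr do rewrite exprMn.
rewrite -mulr_sumr exprMn real_normK ?num_real // ler_wpM2l ?sqr_ge0 //.
exact: shift_prod_mix_l2.
Qed.

Lemma convpow_addD n (H : Zn n -> R) (x y : int -> R) t : fin_supp H ->
  convpow H (x \+ y) t - convpow H x t =
  \sum_(A : {set 'I_n} | A != [set: 'I_n]%SET) convn H (mix x y A) t.
Proof.
move=> finH; have [S _ convE] := convn_fin_suppE finH.
under eq_bigr do rewrite convE /=.
rewrite exchange_big /convpow !convE /= -sumrB; apply: eq_bigr => tau _.
rewrite -mulrBr -mulr_sumr; congr (_ * _).
have -> : \prod_(i < n) (x (t - tau i) + y (t - tau i)) =
    \sum_(A : {set 'I_n}) \prod_(i < n) mix x y A i (t - tau i) by rewrite bigA_distr.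
rewrite (bigD1 [set: 'I_n]%SET) //= addrC.
have -> : \prod_(i < n) mix x y [set: 'I_n] i (t - tau i) = \prod_(i < n) x (t - tau i).
  by apply: eq_bigr => i _; rewrite /mix inE.
by rewrite addrK.
Qed.

Lemma lpnorm2_sum_proper_subsets_le n (F : {set 'I_n} -> int -> R) (c : R)
    (g : nat -> R) :
  0 <= c -> (forall k, 0 <= g k) ->
  (forall A, A != [set: 'I_n]%SET -> l2_bounded_by (F A) (c * g #|A|)) ->
  lpnorm 2 (fun t => \sum_(A | A != [set: 'I_n]%SET) F A t) <=
  c * \sum_(0 <= k < n) (expR 1 * n%:R / k%:R) ^+ k * g k.
Proof.
move=> c0 g0 FA.
have := l2_bounded_by_sum (P := fun A => A != [set: 'I_n]%SET) (index_enum _)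
  (fun A _ => mulr_ge0 c0 (g0 #|A|)) FA.
move/lpnorm2_le/le_trans; apply; first by rewrite sumr_ge0 // => A _; rewrite mulr_ge0.
rewrite -mulr_sumr sum_proper_subsets_card ler_wpM2l // ler_sum // => k _.
by rewrite -[g k *+ _]mulr_natl; apply: ler_wpM2r; [exact: g0 | exact: bin_le_expR].
Qed.

End Convolution.

Theorem lemma23 (R : realType) (n : nat) (H : {ffun 'I_n -> int} -> R)
    (x y : int -> R) :
  (1 <= n)%N -> fin_supp H -> fin_supp x -> fin_supp y ->
  lpnorm 2 (fun t => convpow H (x \+ y) t - convpow H x t) <=
  Num.min
    (lpnorm 2 H * \sum_(0 <= k < n)
        (expR 1 * n%:R / k%:R) ^+ k * lpnorm 1 x ^+ k * lpnorm 1 y ^+ (n - k))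
    (lpnorm 1 H * \sum_(0 <= k < n)
        (expR 1 * n%:R / k%:R) ^+ k * lpnorm (2 * k) x ^+ k
          * lpnorm (2 * (n - k)) y ^+ (n - k)).
Proof.
move=> n_gt0 finH finx finy.
have finmix A i : fin_supp (mix x y A i) by rewrite /mix; case: (i \in A).
under eq_fun do rewrite convpow_addD //.
rewrite le_min; apply/andP; split;
  under [X in _ <= _ * X]eq_bigr do rewrite -mulrA;
  apply: lpnorm2_sum_proper_subsets_le => [||A AT]; rewrite ?lpnorm_ge0 //;
  try by move=> k; rewrite mulr_ge0 ?exprn_ge0 ?lpnorm_ge0.
- by rewrite -(prod_mix (lpnorm 1)); exact: convn_l2_young.
- exact: convn_mix_l2.
Qed.
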